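(* Let $|\psi\rangle,|\phi\rangle,|e\rangle,|f\rangle$ be unit vectors in $\mathbb{C}^2$ and let $\mathcal{D}$ be the set of depolarizing channels $\Psi_\rho(A)=(\operatorname{tr}A)\rho$, $\rho$ a density operator on $\mathbb{C}^2$. Then $$\max_{\Psi\in\mathcal{D}}\left\{\frac12\langle e|\Psi(|\psi\rangle\langle\psi|)|e\rangle+\frac12\langle f|\Psi(|\phi\rangle\langle\phi|)|f\rangle\right\}=\frac12\left(1+|\langle e|f\rangle|\right).$$ This value equals $1$ if and only if $|\langle e|f\rangle|=1$; consequently, $(|\psi\rangle,|\phi\rangle)$ is jointly convertible into $(|e\rangle,|f\rangle)$ within $\mathcal{D}$ if and only if $|\langle e|f\rangle|=1$.
   Context: For a set $\mathcal{X}$ of quantum channels on $\mathcal{L}(\mathbb{C}^2)$, $(|\psi\rangle,|\phi\rangle)$ is jointly convertible into $(|e\rangle,|f\rangle)$ within $\mathcal{X}$ if there exists $\Psi\in\mathcal{X}$ with $\Psi(|\psi\rangle\langle\psi|)=|e\rangle\langle e|$ and $\Psi(|\phi\rangle\langle\phi|)=|f\rangle\langle f|$. *)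

From HB Require Import structures.
From mathcomp Require Import all_boot all_order all_algebra.
Set Implicit Arguments. Unset Strict Implicit. Unset Printing Implicit Defensive.
Import Order.TTheory GRing.Theory Num.Theory.
Local Open Scope ring_scope.

(* C : numClosedFieldType plays the role of the complex numbers;
   vectors of C^2 are column vectors 'cV[C]_2, operators are 'M[C]_2. *)

Definition adjmx (C : numClosedFieldType) (m n : nat) (A : 'M[C]_(m, n)) : 'M[C]_(n, m) :=
  (map_mx Num.conj A)^T.

Definition braket (C : numClosedFieldType) (u : 'cV[C]_2) (A : 'M[C]_2) (v : 'cV[C]_2) : C :=
  (adjmx u *m A *m v) 0 0.

Definition inner (C : numClosedFieldType) (u v : 'cV[C]_2) : C :=
  (adjmx u *m v) 0 0.

Definition unit_vector (C : numClosedFieldType) (v : 'cV[C]_2) : Prop :=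
  inner v v = 1.

Definition proj (C : numClosedFieldType) (v : 'cV[C]_2) : 'M[C]_2 := v *m adjmx v.

Definition density (C : numClosedFieldType) (rho : 'M[C]_2) : Prop :=
  adjmx rho = rho /\ (forall v : 'cV[C]_2, 0 <= braket v rho v) /\ \tr rho = 1.

Definition depol (C : numClosedFieldType) (rho : 'M[C]_2) : 'M[C]_2 -> 'M[C]_2 :=
  fun A => \tr A *: rho.

Definition depol_channels (C : numClosedFieldType) : ('M[C]_2 -> 'M[C]_2) -> Prop :=
  fun Psi => exists rho, density rho /\ Psi = depol rho.

Definition jointly_convertible (C : numClosedFieldType)
  (X : ('M[C]_2 -> 'M[C]_2) -> Prop) (psi phi e f : 'cV[C]_2) : Prop :=
  exists Psi, X Psi /\ Psi (proj psi) = proj e /\ Psi (proj phi) = proj f.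

Definition success (C : numClosedFieldType) (psi phi e f : 'cV[C]_2)
  (Psi : 'M[C]_2 -> 'M[C]_2) : C :=
  2^-1 * braket e (Psi (proj psi)) e + 2^-1 * braket f (Psi (proj phi)) f.

(* Since Psi_rho(|psi><psi|) = rho for unit psi, the objective is
   (<e|rho|e> + <f|rho|f>) / 2 = tr(rho P) / 2 with P = |e><e| + |f><f|.
   With s = |<e|f>|, the matrix N = (1 + s) I - P is Hermitian with trace 2s
   and determinant (1 + s)^2 - 2 (1 + s) + (1 - s^2) = 0, so N = |v><v| for
   some v and tr(rho N) = <v|rho|v> >= 0.  Equality holds for rho proportional
   to |w><w| with w = e + u f, the phase u being chosen so that u <e|f> = s.
   Joint conversion forces rho = |e><e| = |f><f|, which happens iff f is a
   phase multiple of e, i.e. iff s = 1. *)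

From HB Require Import structures.
From mathcomp Require Import all_boot all_order all_algebra.
From mathcomp Require Import ring.
Set Implicit Arguments. Unset Strict Implicit. Unset Printing Implicit Defensive.
Import Order.TTheory GRing.Theory Num.Theory.
Local Open Scope ring_scope.

Lemma ge0_of_mul_add_ge0 (R : numDomainType) (x y : R) :
  x \is Num.real -> 0 <= x * y -> 0 <= x + y -> 0 <= x.
Proof.
move=> xR xy_ge0 xDy_ge0; rewrite real_leNgt ?real0 //; apply/negP => x_lt0.
have y_gt0 : 0 < y.
  by rewrite (lt_le_trans _ (_ : -x <= y)) ?oppr_gt0 // -subr_ge0 opprK addrC.
by move: xy_ge0; rewrite nmulr_rge0 // lt_geF.
Qed.

Section Qubit.
Variable C : numClosedFieldType.
Implicit Types (u v w e f : 'cV[C]_2) (A N rho : 'M[C]_2).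

Lemma ord2_cases (i : 'I_2) : i = 0 \/ i = 1.
Proof. by case: i => [[|[|//]]] ?; [left | right]; apply/val_inj. Qed.

Lemma sum_ord2 (F : 'I_2 -> C) : \sum_(i < 2) F i = F 0 + F 1.
Proof. by rewrite big_ord_recl big_ord1; congr (F _ + F _); apply/val_inj. Qed.

Lemma innerE u v : inner u v = (u 0 0)^* * v 0 0 + (u 1 0)^* * v 1 0.
Proof. by rewrite /inner /adjmx !mxE sum_ord2 !mxE. Qed.

Lemma braketE u A v : braket u A v =
  (u 0 0)^* * (A 0 0 * v 0 0 + A 0 1 * v 1 0) +
  (u 1 0)^* * (A 1 0 * v 0 0 + A 1 1 * v 1 0).
Proof. by rewrite /braket /adjmx !mxE sum_ord2 !mxE !sum_ord2 !mxE; ring. Qed.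

Lemma projE v i j : proj v i j = v i 0 * (v j 0)^*.
Proof. by rewrite /proj /adjmx !mxE big_ord1 !mxE. Qed.

Lemma adjmxE m n (A : 'M[C]_(m, n)) i j : adjmx A i j = (A j i)^*.
Proof. by rewrite /adjmx !mxE. Qed.

Lemma mxtrace2 A : \tr A = A 0 0 + A 1 1.
Proof. exact: sum_ord2. Qed.

Lemma det2 A : \det A = A 0 0 * A 1 1 - A 0 1 * A 1 0.
Proof.
rewrite (expand_det_row _ 0) sum_ord2 /cofactor !det_mx11 !mxE.
have -> : lift 0 (0 : 'I_1) = 1 :> 'I_2 by apply/val_inj.
have -> : lift 1 (0 : 'I_1) = 0 :> 'I_2 by apply/val_inj.
by rewrite /= expr0 expr1; ring.
Qed.

Lemma conj_inner u v : (inner u v)^* = inner v u.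
Proof. by rewrite !innerE rmorphD !rmorphM /= !conjCK; ring. Qed.

Lemma inner_self_eq0 v : inner v v = 0 -> v = 0.
Proof.
rewrite innerE -!normCKC => /eqP; rewrite paddr_eq0 ?exprn_ge0 // !sqrf_eq0 !normr_eq0.
move=> /andP[/eqP v0 /eqP v1]; apply/matrixP => i j.
by rewrite !mxE (ord1 j); case: (ord2_cases i) => ->.
Qed.

Lemma innerDZr u v w (k : C) : inner u (v + k *: w) = inner u v + k * inner u w.
Proof. by rewrite !innerE !mxE; ring. Qed.

Lemma innerDZl u v w (k : C) : inner (u + k *: v) w = inner u w + k^* * inner v w.
Proof. by rewrite -conj_inner innerDZr rmorphD rmorphM /= !conj_inner. Qed.

Lemma braketZ u A v (k : C) : braket u (k *: A) v = k * braket u A v.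
Proof. by rewrite !braketE !mxE; ring. Qed.

Lemma braket_proj u w : braket u (proj w) u = `|inner u w| ^+ 2.
Proof. by rewrite normCK conj_inner braketE !projE !innerE; ring. Qed.

Lemma projZ (k : C) v : proj (k *: v) = (k * k^*) *: proj v.
Proof. by apply/matrixP => i j; rewrite projE [RHS]mxE projE !mxE rmorphM; ring. Qed.

Lemma adjmxZ m n (k : C) (A : 'M[C]_(m, n)) : adjmx (k *: A) = k^* *: adjmx A.
Proof. by apply/matrixP => i j; rewrite !mxE rmorphM. Qed.

Lemma adjmxB m n (A B : 'M[C]_(m, n)) : adjmx (A - B) = adjmx A - adjmx B.
Proof. by apply/matrixP => i j; rewrite !mxE rmorphB. Qed.

Lemma adjmx_scalar n (k : C) : adjmx (k%:M : 'M_n) = k^*%:M.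
Proof. by apply/matrixP => i j; rewrite !mxE rmorphMn eq_sym. Qed.

Lemma adjmx_proj v : adjmx (proj v) = proj v.
Proof. by apply/matrixP => i j; rewrite adjmxE !projE rmorphM /= conjCK mulrC. Qed.

Lemma mxtrace_proj v : \tr (proj v) = inner v v.
Proof. by rewrite mxtrace2 !projE innerE; ring. Qed.

Lemma mxtrace_mul_proj A v : \tr (A *m proj v) = braket v A v.
Proof. by rewrite mxtrace2 ![(A *m _) _ _]mxE !sum_ord2 !projE braketE; ring. Qed.

Lemma sqrtC_mul_conj (x : C) : 0 <= x -> sqrtC x * (sqrtC x)^* = x.
Proof. by move=> x_ge0; rewrite geC0_conj ?sqrtC_ge0 // -expr2 sqrtCK. Qed.

Lemma density_scale_proj (c : C) w :
  0 <= c -> c * inner w w = 1 -> density (c *: proj w).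
Proof.
move=> c_ge0 cw1; split; [|split].
- by rewrite adjmxZ adjmx_proj geC0_conj.
- by move=> x; rewrite braketZ braket_proj mulr_ge0 ?exprn_ge0.
- by rewrite mxtraceZ mxtrace_proj.
Qed.

Lemma density_proj e : unit_vector e -> density (proj e).
Proof.
by move=> e1; rewrite -[proj e]scale1r; apply: density_scale_proj; rewrite ?ler01 ?mul1r.
Qed.

Lemma depol_proj rho psi : unit_vector psi -> depol rho (proj psi) = rho.
Proof. by move=> psi1; rewrite /depol mxtrace_proj psi1 scale1r. Qed.

Lemma success_depol psi phi e f rho : unit_vector psi -> unit_vector phi ->
  success psi phi e f (depol rho) = 2^-1 * (braket e rho e + braket f rho f).
Proof. by move=> psi1 phi1; rewrite /success !depol_proj // mulrDr. Qed.

Lemma hermitian_det0_proj N :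
  adjmx N = N -> \det N = 0 -> 0 <= \tr N -> exists v, N = proj v.
Proof.
move=> hermN; rewrite det2 mxtrace2 => /eqP; rewrite subr_eq0 => /eqP detN trN.
have N10 : N 1 0 = (N 0 1)^* by rewrite -[in LHS]hermN adjmxE.
have N00R : N 0 0 \is Num.real by apply/CrealP; rewrite -[in RHS]hermN adjmxE.
have N01_norm : N 0 0 * N 1 1 = `|N 0 1| ^+ 2 by rewrite detN N10 normCK.
have N00_ge0 : 0 <= N 0 0.
  by apply: (ge0_of_mul_add_ge0 (y := N 1 1) N00R); rewrite // N01_norm exprn_ge0.
have [N00_0 | N00_neq0] := eqVneq (N 0 0) 0.
- have N01_0 : N 0 1 = 0.
    by apply/eqP; rewrite -normr_eq0 -sqrf_eq0 -N01_norm N00_0 mul0r.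
  exists (sqrtC (N 1 1) *: delta_mx 1 0).
  rewrite projZ sqrtC_mul_conj; last by rewrite N00_0 add0r in trN.
  apply/matrixP => i j; rewrite mxE projE !mxE.
  by case: (ord2_cases i) => ->; case: (ord2_cases j) => -> /=;
    rewrite ?N10 ?N00_0 ?N01_0 ?conjC0 ?conjC1 ?(mulr0, mulr1).
- (* det N = 0 makes proj (col 0 N) equal to N 0 0 *: N. *)
  exists (sqrtC (N 0 0)^-1 *: col 0 N).
  rewrite projZ sqrtC_mul_conj ?invr_ge0 //.
  apply/matrixP => i j; rewrite mxE projE !mxE.
  by case: (ord2_cases i) => ->; case: (ord2_cases j) => ->;
    apply: (mulfI N00_neq0); rewrite mulVKf // ?detN ?(conj_Creal N00R) ?N10 ?conjCK // mulrC.
Qed.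

Lemma det_scalar_sub_two_proj (c : C) e f : \det (c%:M - proj e - proj f) =
  c ^+ 2 - c * (inner e e + inner f f) + inner e e * inner f f - `|inner e f| ^+ 2.
Proof. by rewrite det2 normCK conj_inner !mxE !big_ord1 !mxE /= !innerE; ring. Qed.

Lemma exists_phase (a : C) : exists2 u : C, `|u| = 1 & u * a = `|a|.
Proof.
have [-> | a_neq0] := eqVneq a 0; first by exists 1; rewrite ?normr1 ?normr0 ?mulr0.
have na_neq0 : `|a| != 0 by rewrite normr_eq0.
exists (a^* / `|a|); last by rewrite mulrAC -normCKC expr2 mulfK.
by rewrite normrM normfV norm_conjC normr_id divff.
Qed.

Lemma braket_add_le e f rho : unit_vector e -> unit_vector f -> density rho ->
  braket e rho e + braket f rho f <= 1 + `|inner e f|.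
Proof.
move=> e1 f1 [_ [rho_psd rho_tr]]; set s : C := `|inner e f|.
have s_ge0 : 0 <= s := normr_ge0 _.
pose N := (1 + s)%:M - proj e - proj f.
have hermN : adjmx N = N.
  by rewrite !adjmxB !adjmx_proj adjmx_scalar rmorphD /= conjC1 geC0_conj.
have detN : \det N = 0.
  by rewrite det_scalar_sub_two_proj e1 f1 /s; ring.
have trN : 0 <= \tr N.
  rewrite !raddfB /= -scalemx1 mxtraceZ mxtrace1 !mxtrace_proj e1 f1.
  by rewrite (_ : _ - 1 - 1 = s *+ 2) ?mulrn_wge0 //; ring.
have [v Nv] := hermitian_det0_proj hermN detN trN.
have := rho_psd v; rewrite -mxtrace_mul_proj -Nv !mulmxBr mul_mx_scalar.
by rewrite !raddfB /= mxtraceZ !mxtrace_mul_proj rho_tr mulr1 -addrA -opprD subr_ge0.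
Qed.

Lemma braket_add_attained e f : unit_vector e -> unit_vector f ->
  exists2 rho, density rho & braket e rho e + braket f rho f = 1 + `|inner e f|.
Proof.
move=> e1 f1; set a := inner e f; set s : C := `|a|.
have [u u1 ua] := exists_phase a.
have uu1 : u * u^* = 1 by rewrite -normCK u1 expr1n.
have s_ge0 : 0 <= s := normr_ge0 a.
have s1_gt0 : 0 < 1 + s by rewrite ltr_wpDr ?ltr01.
have a_conj : a^* = u * s.
  by rewrite -[a^*]mul1r -uu1 -mulrA -rmorphM ua /= conj_normC.
pose w := e + u *: f.
have ew : inner e w = 1 + s by rewrite innerDZr e1 ua.
have fw : inner f w = u * (1 + s).
  by rewrite innerDZr f1 -conj_inner -/a a_conj; ring.
have ww : inner w w = 2 * (1 + s).
  by rewrite innerDZl ew fw mulrA (mulrC u^*) uu1; ring.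
exists ((2 * (1 + s))^-1 *: proj w).
  apply: density_scale_proj; first by rewrite invr_ge0 mulr_ge0 ?ler0n ?ltW.
  by rewrite ww mulVf // mulf_neq0 ?pnatr_eq0 ?gt_eqF.
rewrite !braketZ !braket_proj ew fw normrM u1 mul1r ger0_norm ?ltW //.
by field; rewrite gt_eqF.
Qed.

Lemma proj_eq_of_norm_inner1 e f :
  unit_vector e -> unit_vector f -> `|inner e f| = 1 -> proj f = proj e.
Proof.
move=> e1 f1 ef1; set a := inner e f in ef1.
have aa1 : a * a^* = 1 by rewrite -normCK ef1 expr1n.
have f_ae : f = a *: e.
  apply/eqP; rewrite -subr_eq0 -scaleNr; apply/eqP/inner_self_eq0.
  rewrite innerDZl !innerDZr e1 f1 -conj_inner -/a rmorphN /=.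
  by rewrite mulr1 subrr mulr0 addr0 mulNr aa1 subrr.
by rewrite f_ae projZ aa1 scale1r.
Qed.

End Qubit.

Theorem corollary1 (C : numClosedFieldType) (psi phi e f : 'cV[C]_2) :
  unit_vector psi -> unit_vector phi -> unit_vector e -> unit_vector f ->
  let M := 2^-1 * (1 + `|inner e f|) in
  ((exists Psi, depol_channels Psi /\ success psi phi e f Psi = M) /\
   (forall Psi, depol_channels Psi -> success psi phi e f Psi <= M)) /\
  (M = 1 <-> `|inner e f| = 1) /\
  (jointly_convertible (@depol_channels C) psi phi e f <-> `|inner e f| = 1).
Proof.
move=> psi1 phi1 e1 f1 M.
split; [split | split].
- have [rho rho_dens rho_opt] := braket_add_attained e1 f1.
  by exists (depol rho); split; [exists rho | rewrite success_depol // rho_opt].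
- move=> _ [rho [rho_dens ->]]; rewrite success_depol // ler_wpM2l ?invr_ge0 ?ler0n //.
  exact: braket_add_le.
- rewrite /M; split => [|->]; last by field.
  by move/(congr1 ( *%R 2)); rewrite mulVKf ?pnatr_eq0 // mulr1 => /addrI.
- split => [[_ [[rho [_ ->]] []]] | ef1].
    rewrite !depol_proj // => -> proj_ef; apply/eqP.
    by rewrite -(sqrp_eq1 (normr_ge0 _)) -braket_proj -proj_ef braket_proj e1 normr1 expr1n.
  exists (depol (proj e)); split; first by exists (proj e); split; [exact: density_proj|].
  by rewrite !depol_proj // (proj_eq_of_norm_inner1 e1 f1 ef1).
Qed.
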